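(* Let $G$ be a looped simple graph, $S$ a subtransversal of $W(G)$, and $\nu\ge 0$ an integer. Then $\nu$ equals the nullity $|S|-r(S)$ of $S$ in $M[IAS(G)]$ if and only if there exist a looped simple graph $H$ locally equivalent to $G$, a stable set $X\subseteq V(H)$ with $|X|=\nu$, and an induced isomorphism $\beta:M[IAS(G)]\to M[IAS(H)]$ such that $$\bigcup_{x\in X}\zeta_H(x)\subseteq\beta(S)\subseteq\{\phi_H(v):v\in V(H)\setminus X\}\cup\bigcup_{x\in X}\zeta_H(x).$$
   Context: A looped simple graph is a finite graph in which each vertex carries at most one loop and no two distinct vertices are joined by more than one edge. ''Adjacent''/''neighbors'' refer only to distinct vertices joined by a non-loop edge; $N_G(v)$ is the set of neighbors of $v$; a stable set is a set of vertices no two of which are adjacent. $A(G)$ is the $V(G)\times V(G)$ matrix over $GF(2)$ with diagonal entry $1$ exactly at looped vertices and off-diagonal entry $1$ exactly for adjacent pairs. $IAS(G)=(I\mid A(G)\mid A(G)+I)$ over $GF(2)$, rows indexed by $V(G)$; the $v$-columns of the three blocks are labelled $\phi_G(v),\chi_G(v),\psi_G(v)$. $M[IAS(G)]$ is the binary column matroid of $IAS(G)$ on $W(G)=\{\phi_G(v),\chi_G(v),\psi_G(v):v\in V(G)\}$, with rank function $r$. The vertex triple of $v$ is $\tau_G(v)=\{\phi_G(v),\chi_G(v),\psi_G(v)\}$; a subtransversal meets each vertex triple in at most one element. Neighborhood circuit: $\zeta_G(v)=\{\chi_G(v)\}\cup\{\phi_G(w):w\in N_G(v)\}$ if $v$ is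 unlooped, and $\{\psi_G(v)\}\cup\{\phi_G(w):w\in N_G(v)\}$ if $v$ is looped. Local equivalence: $G_\ell^v$ complements the loop status of $v$; $G_s^v$ complements the adjacency status of every pair of distinct neighbors of $v$; $G_{ns}^v$ does this and also complements the loop status of every neighbor of $v$. $H$ is locally equivalent to $G$ if obtained from $G$ by a finite sequence of such operations. Induced isomorphisms: for each such operation producing $G'$ from $G$ there is a matroid isomorphism $M[IAS(G)]\to M[IAS(G')]$ sending $\alpha_G(x)\mapsto\alpha_{G'}(x)$ for all $\alpha\in\{\phi,\chi,\psi\}$, $x\in V(G)$, except: for $G'=G_\ell^v$, $\chi_G(v)\mapsto\psi_{G'}(v)$, $\psi_G(v)\mapsto\chi_{G'}(v)$; for $G'=G_{ns}^v$ with $v$ unlooped, $\phi_G(v)\mapsto\psi_{G'}(v)$, $\psi_G(v)\mapsto\phi_{G'}(v)$, and with $v$ looped, $\phi_G(v)\mapsto\chi_{G'}(v)$, $\chi_G(v)\mapsto\phi_{G'}(v)$; for $G'=G_s^v$, the same exchange at $v$ as for $G_{ns}^v$ and in addition, for every $w\in N_G(v)$, $\chi_G(w)\mapsto\psi_{G'}(w)$, $\psi_G(w)\mapsto\chi_{G'}(w)$. An induced isomorphism $M[IAS(G)]\to M[IAS(H)]$ is a composition of such isomorphisms along a sequence of operations transforming $G$ into $H$. *)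

From HB Require Import structures.
From mathcomp Require Import all_boot all_order all_algebra.
Set Implicit Arguments. Unset Strict Implicit. Unset Printing Implicit Defensive.
Import GRing.Theory.
Local Open Scope ring_scope.

Record lgraph (V : finType) := LGraph {
  ladj : rel V;
  lloop : pred V;
  ladj_sym : symmetric ladj;
  ladj_irr : irreflexive ladj }.

Section Graphs.
Variable V : finType.
Implicit Types (G : lgraph V) (v : V).

Definition nbhd G v : {set V} := [set w | ladj G v w].

Definition stable G (X : {set V}) : Prop :=
  forall x y, x \in X -> y \in X -> ~~ ladj G x y.

Definition loc_l v G : lgraph V :=
  @LGraph V (ladj G) (fun x => lloop G x (+) (x == v)) (@ladj_sym _ G) (@ladj_irr _ G).

Definition sadj v G : rel V :=
  fun x y => ladj G x y (+) [&& x != y, ladj G v x & ladj G v y].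

Lemma sadj_sym v G : symmetric (sadj v G).
Proof. by move=> x y; rewrite /sadj (ladj_sym G x y) (eq_sym x y) (andbC (ladj G v x)). Qed.

Lemma sadj_irr v G : irreflexive (sadj v G).
Proof. by move=> x; rewrite /sadj ladj_irr eqxx. Qed.

Definition loc_s v G : lgraph V :=
  @LGraph V (sadj v G) (lloop G) (@sadj_sym v G) (@sadj_irr v G).

Definition loc_ns v G : lgraph V :=
  @LGraph V (sadj v G) (fun x => lloop G x (+) ladj G v x) (@sadj_sym v G) (@sadj_irr v G).

End Graphs.

Inductive kind := Phi | Chi | Psi.
Definition kind2o (k : kind) : 'I_3 :=
  match k with Phi => inord 0 | Chi => inord 1 | Psi => inord 2 end.
Definition o2kind (i : 'I_3) : kind :=
  match val i with 0 => Phi | 1 => Chi | _ => Psi end.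
Lemma kind2oK : cancel kind2o o2kind.
Proof. by case; rewrite /o2kind /= inordK. Qed.
HB.instance Definition _ := Finite.copy kind (can_type kind2oK).

(* W(G) = V x {phi,chi,psi}: (k, v) stands for k_G(v). *)
Definition elt (V : finType) := (kind * V)%type.

Section Matroid.
Variable V : finType.
Implicit Types (G : lgraph V) (v : V).

(* the column of IAS(G) labelled by w, as a function of the row index u *)
Definition IAScol G (w : elt V) (u : V) : 'F_2 :=
  let: (k, v) := w in
  match k with
  | Phi => (u == v)%:R
  | Chi => (if u == v then lloop G v else ladj G u v)%:R
  | Psi => (if u == v then ~~ lloop G v else ladj G u v)%:R
  end.

Definition indep G (T : {set elt V}) : bool :=
  [forall c : {ffun elt V -> 'F_2},
    [forall w, (w \notin T) ==> (c w == 0)] ==>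
    [forall u, \sum_w c w * IAScol G w u == 0] ==>
    [forall w, c w == 0]].

Definition mrank G (S : {set elt V}) : nat :=
  (\max_(T : {set elt V} | (T \subset S) && indep G T) #|T|)%N.

Definition nullity G (S : {set elt V}) : nat := (#|S| - mrank G S)%N.

Definition subtransversal (S : {set elt V}) : Prop :=
  forall v, (#|[set w in S | w.2 == v]| <= 1)%N.

Definition zeta G v : {set elt V} :=
  (if lloop G v then (Psi, v) else (Chi, v)) |: [set (Phi, w) | w in nbhd G v].

Inductive locop := Oloop | Os | Ons.

Definition apply_op (o : locop) v G : lgraph V :=
  match o with Oloop => loc_l v G | Os => loc_s v G | Ons => loc_ns v G end.

Definition apply_ops G (s : seq (locop * V)) : lgraph V :=
  foldl (fun H ov => apply_op ov.1 ov.2 H) G s.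

Definition swap_at (k1 k2 : kind) v (w : elt V) : elt V :=
  if w.2 == v then
    (if w.1 == k1 then (k2, v) else if w.1 == k2 then (k1, v) else w)
  else w.

Definition ns_exch G v : elt V -> elt V :=
  if lloop G v then swap_at Phi Chi v else swap_at Phi Psi v.

Definition step_iso (o : locop) v G (w : elt V) : elt V :=
  match o with
  | Oloop => swap_at Chi Psi v w
  | Ons => ns_exch G v w
  | Os => if w.2 \in nbhd G v then swap_at Chi Psi w.2 w else ns_exch G v w
  end.

Fixpoint induced_iso G (s : seq (locop * V)) : elt V -> elt V :=
  match s with
  | [::] => id
  | (o, v) :: s' => fun w => induced_iso (apply_op o v G) s' (step_iso o v G w)
  end.

End Matroid.

(* Each local operation at [v], read through its induced isomorphism, acts on
   the columns of IAS(G) as the invertible row operation adding row [v] to the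
   rows of the neighbours of [v] (the identity for loop complementation), so
   induced isomorphisms preserve nullity.  If [beta(S)] and [X] are as in the
   statement, the phi-elements of [beta(S)] are independent, and each other
   element is the non-phi element of some zeta_H(x), x in X, whose column is the
   sum of the columns phi_H(w), w in N_H(x), all in [beta(S)]; so the nullity
   is |X|.  Conversely, induct on the number of non-phi elements of S: a chi- or
   psi-element of [v] outside zeta(v) becomes phi(v) under G_ns^v; the non-phi
   element of zeta(u) becomes phi(u) under G_ns^w then G_ns^u whenever [w] is a
   neighbour of [u] with phi(w) not in S; and if neither move applies, the
   vertices whose zeta has its non-phi element in S form the stable set [X]. *)

From HB Require Import structures.
From mathcomp Require Import all_boot all_order all_algebra.
Set Implicit Arguments. Unset Strict Implicit. Unset Printing Implicit Defensive.
Import GRing.Theory.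
Local Open Scope ring_scope.

Lemma F2_natr_addb (a b : bool) : (a%:R + b%:R : 'F_2) = (a (+) b)%:R.
Proof. by case: a; case: b; rewrite ?addr0 ?add0r //; apply/val_inj. Qed.

Lemma F2_natr_andb (a b : bool) : (a%:R * b%:R : 'F_2) = (a && b)%:R.
Proof. by case: a; case: b; rewrite ?mulr0 ?mul0r ?mulr1. Qed.

Lemma imset_sep (aT rT : finType) (f : aT -> rT) (A : {set aT}) (P : pred rT) :
  [set y in f @: A | P y] = f @: [set x in A | P (f x)].
Proof.
apply/setP => y; rewrite inE; apply/andP/imsetP => [[/imsetP [x xA ->] Pfx] | [x]].
  by exists x; rewrite // inE xA.
by rewrite inE => /andP [xA Pfx] ->; rewrite imset_f.
Qed.

Lemma kind_eqE (a b : kind) :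
  (a == b) = match a, b with Phi, Phi | Chi, Chi | Psi, Psi => true | _, _ => false end.
Proof. by case: a; case: b => //=; rewrite ?eqxx //; apply/eqP. Qed.

Section Columns.
Variable V : finType.
Implicit Types (G : lgraph V) (u v x : V) (w : elt V).

Definition adjb G u x : bool := if u == x then lloop G x else ladj G u x.

Definition colb G w u : bool :=
  match w.1 with
  | Phi => u == w.2
  | Chi => adjb G u w.2
  | Psi => adjb G u w.2 (+) (u == w.2)
  end.

Lemma IAScolE G w u : IAScol G w u = (colb G w u)%:R.
Proof.
by case: w => -[] x //=; rewrite /colb /adjb /=; case: eqP; rewrite ?addbT ?addbF.
Qed.

Lemma adjb_neq G u x : u != x -> adjb G u x = ladj G u x.
Proof. by rewrite /adjb => /negbTE ->. Qed.

Lemma adjb_loc_ns v G u x :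
  adjb (loc_ns v G) u x = adjb G u x (+) ladj G v u && ladj G v x.
Proof. by rewrite /adjb /= /sadj; case: (eqVneq u x) => [->|]; rewrite ?andbb. Qed.

Lemma swap_at_snd k1 k2 v w : (swap_at k1 k2 v w).2 = w.2.
Proof. by case: w => k x; rewrite /swap_at /=; case: eqP => [->|] //; do 2?case: ifP. Qed.

Lemma swap_at_fix k1 k2 v w : w.2 != v -> swap_at k1 k2 v w = w.
Proof. by rewrite /swap_at => /negbTE ->. Qed.

Lemma swap_atK k1 k2 v : k1 != k2 -> involutive (@swap_at V k1 k2 v).
Proof.
move=> nk [k x]; have [->|nxv] := eqVneq x v; last by rewrite !swap_at_fix.
have nk' : k2 != k1 by rewrite eq_sym.
rewrite /swap_at /= eqxx; case: (eqVneq k k1) => [->|nk1]; [|case: (eqVneq k k2) => [->|nk2]].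
all: by rewrite /= eqxx ?(negbTE nk) ?(negbTE nk') ?(negbTE nk1) ?(negbTE nk2) ?eqxx.
Qed.

Lemma ns_exch_snd G v w : (ns_exch G v w).2 = w.2.
Proof. by rewrite /ns_exch; case: lloop; rewrite swap_at_snd. Qed.

Lemma ns_exch_fix G v k x : x != v -> ns_exch G v (k, x) = (k, x).
Proof. by move=> nxv; rewrite /ns_exch; case: lloop; rewrite swap_at_fix. Qed.

Lemma ns_exchK G v : involutive (ns_exch G v).
Proof. by move=> w; rewrite /ns_exch; case: lloop; rewrite swap_atK // kind_eqE. Qed.

Lemma step_iso_snd o v G w : (step_iso o v G w).2 = w.2.
Proof.
case: o; rewrite /step_iso ?ns_exch_snd ?swap_at_snd //.
by case: ifP => _; rewrite ?swap_at_snd ?ns_exch_snd.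
Qed.

Lemma step_isoK o v G : involutive (step_iso o v G).
Proof.
move=> w; case: o; rewrite /step_iso; first by rewrite swap_atK // kind_eqE.
  case nbr_w: (w.2 \in nbhd G v); first by rewrite swap_at_snd nbr_w swap_atK // kind_eqE.
  by rewrite ns_exch_snd nbr_w ns_exchK.
by rewrite ns_exchK.
Qed.

(* A column's entries only see the loop status of its own vertex, so toggling
   that loop amounts to exchanging the chi- and psi-columns of the vertex. *)
Lemma colb_swap_loop G G' k x u :
  ladj G' =2 ladj G -> lloop G' x = ~~ lloop G x ->
  colb G' (swap_at Chi Psi x (k, x)) u = colb G (k, x) u.
Proof.
move=> eq_adj flip_x; rewrite /swap_at /= eqxx.
case: k; rewrite !kind_eqE /colb /adjb /= ?eq_adj ?flip_x //.
  by case: eqP; rewrite ?addbT ?addbF ?negbK.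
by case: eqP; rewrite ?addbT ?addbF.
Qed.

Lemma colb_same_loop G G' w u :
  ladj G' =2 ladj G -> lloop G' w.2 = lloop G w.2 -> colb G' w u = colb G w u.
Proof. by move=> eq_adj eq_x; rewrite /colb /adjb eq_adj eq_x. Qed.

Lemma colb_loc_l v G w u : colb (loc_l v G) (swap_at Chi Psi v w) u = colb G w u.
Proof.
case: w => k x; have [<-|nxv] := eqVneq x v.
  by apply: colb_swap_loop => //=; rewrite eqxx addbT.
by rewrite swap_at_fix //; apply: colb_same_loop => //=; rewrite (negbTE nxv) addbF.
Qed.

(* With [n] the neighbourhood vector of [v], A(G_ns^v) = A(G) + n n^T, and
   [ns_exch] exchanges phi(v) = e_v with the column e_v + n of G_ns^v. *)
Lemma colb_loc_ns v G w u :
  colb (loc_ns v G) (ns_exch G v w) u = colb G w u (+) ladj G v u && colb G w v.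
Proof.
case: w => k x; have [<-|nvx] := eqVneq v x; last first.
  rewrite ns_exch_fix 1?eq_sym // /colb /= adjb_loc_ns (adjb_neq G nvx) (negbTE nvx).
  by case: k; rewrite ?andbF ?addbF // addbAC.
rewrite /ns_exch /swap_at /=; case: k; case Lv: (lloop G v); rewrite /= !eqxx /= ?kind_eqE /=.
all: rewrite /colb /= ?adjb_loc_ns ?ladj_irr /= ?addbF /adjb /= Lv eqxx ?ladj_irr.
all: case: (eqVneq u v) => [->|nuv]; rewrite ?eqxx ?ladj_irr ?Lv /= ?(ladj_sym G u v).
all: by rewrite ?andbF ?andbT ?addbF ?addbT ?addbb.
Qed.

(* [G_s^v] is [G_ns^v] with the loops at the neighbours of [v] toggled back. *)
Lemma colb_loc_s v G w u :
  colb (loc_s v G) (step_iso Os v G w) u = colb (loc_ns v G) (ns_exch G v w) u.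
Proof.
case: w => k x; rewrite /step_iso /nbhd inE /=; case vx: (ladj G v x).
  have nxv : x != v by apply: contraTneq vx => ->; rewrite ladj_irr.
  by rewrite ns_exch_fix //; apply: colb_swap_loop => //=; rewrite vx addbT negbK.
by apply: colb_same_loop => //=; rewrite ns_exch_snd /= vx addbF.
Qed.

Definition step_coef o G v u : bool := if o is Oloop then false else ladj G v u.

Lemma step_col o v G w u :
  colb (apply_op o v G) (step_iso o v G w) u =
  colb G w u (+) step_coef o G v u && colb G w v.
Proof.
case: o => /=; last exact: colb_loc_ns.
  by rewrite colb_loc_l addbF.
by rewrite colb_loc_s colb_loc_ns.
Qed.

End Columns.

Section RankInvariance.
Variable V : finType.
Implicit Types (G : lgraph V) (T S : {set elt V}).

Definition colcomb G (c : elt V -> 'F_2) (u : V) : 'F_2 := \sum_w c w * IAScol G w u.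

Lemma indepP G T :
  reflect (forall c : {ffun elt V -> 'F_2}, (forall w, w \notin T -> c w = 0) ->
             (forall u, colcomb G c u = 0) -> forall w, c w = 0)
          (indep G T).
Proof.
apply: (iffP forallP) => [indepT c c_supp c_dep w | indepT c].
  have supp : [forall w, (w \notin T) ==> (c w == 0)].
    by apply/forallP => w'; apply/implyP => /c_supp ->.
  have dep : [forall u, \sum_w c w * IAScol G w u == 0].
    by apply/forallP => u; apply/eqP; apply: c_dep.
  by move: (indepT c); rewrite supp dep => /forallP/(_ w)/eqP.
apply/implyP => /forallP c_supp; apply/implyP => /forallP c_dep.
apply/forallP => w; apply/eqP; apply: indepT => [w' w'T | u].
  exact/eqP/(implyP (c_supp w')).
exact/eqP/c_dep.
Qed.

Lemma indep_row_op G G' (b : elt V -> elt V) (k : V -> 'F_2) v :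
  involutive b -> k v = 0 ->
  (forall w u, IAScol G' (b w) u = IAScol G w u + k u * IAScol G w v) ->
  forall T, indep G' (b @: T) = indep G T.
Proof.
move=> bK kv0 col_b T; have b_inj : injective b := inv_inj bK.
have comb_b c u : colcomb G' c u =
    colcomb G (c \o b) u + k u * colcomb G (c \o b) v.
  rewrite /colcomb (reindex_inj b_inj) mulr_sumr -big_split /=.
  by apply: eq_bigr => w _; rewrite col_b mulrDr mulrCA.
have mem_b w : (b w \in b @: T) = (w \in T) by rewrite mem_imset.
apply/indepP/indepP => indepT c c_supp c_dep w.
- pose c' := [ffun w => c (b w)].
  have c'b : c' \o b =1 c by move=> w' /=; rewrite ffunE bK.
  have comb_c' u : colcomb G (c' \o b) u = colcomb G c u.
    by apply: eq_bigr => w' _; rewrite c'b.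
  have := indepT c' _ _ (b w); rewrite ffunE bK; apply.
  + by move=> w'; rewrite -{1}(bK w') mem_b ffunE => /c_supp.
  + by move=> u; rewrite comb_b !comb_c' !c_dep mulr0 addr0.
- pose c' := [ffun w => c (b w)].
  have comb_c' u : colcomb G (c \o b) u = colcomb G c' u.
    by apply: eq_bigr => w' _; rewrite ffunE.
  have c'v : colcomb G c' v = 0 by have := c_dep v; rewrite comb_b kv0 mul0r addr0 comb_c'.
  rewrite -(bK w); have := indepT c' _ _ (b w); rewrite ffunE; apply.
  + by move=> w'; rewrite -mem_b ffunE => /c_supp.
  + by move=> u; have := c_dep u; rewrite comb_b !comb_c' c'v mulr0 addr0.
Qed.

Lemma step_indep o v G T :
  indep (apply_op o v G) (step_iso o v G @: T) = indep G T.
Proof.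
apply: (@indep_row_op G _ _ (fun u => (step_coef o G v u)%:R) v (step_isoK o v G)).
  by case: o => //=; rewrite ladj_irr.
by move=> w u; rewrite !IAScolE step_col -F2_natr_addb -F2_natr_andb.
Qed.

Lemma imset_involutive (b : elt V -> elt V) T : involutive b -> b @: (b @: T) = T.
Proof.
move=> bK; rewrite -imset_comp -[RHS]imset_id.
by apply: eq_imset => w /=; rewrite bK.
Qed.

Lemma nullity_invol_iso G G' (b : elt V -> elt V) S :
  involutive b -> (forall T, indep G' (b @: T) = indep G T) ->
  nullity G' (b @: S) = nullity G S.
Proof.
move=> bK indep_b; rewrite /nullity /mrank card_imset; last exact: inv_inj.
have imset_b_inj : injective (fun T => b @: T).
  by move=> T1 T2 eqT; rewrite -(imset_involutive T1 bK) eqT imset_involutive.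
congr (_ - _)%N; rewrite (reindex_inj imset_b_inj) /=.
apply: eq_big => [T|T _]; last by rewrite card_imset //; apply: inv_inj.
rewrite indep_b; congr (_ && _); apply/idP/idP; last exact: imsetS.
by move/(imsetS b); rewrite !imset_involutive.
Qed.

Lemma nullity_induced_iso G (s : seq (locop * V)) S :
  nullity (apply_ops G s) (induced_iso G s @: S) = nullity G S.
Proof.
elim: s G S => [|[o v] s IH] G S /=; first by rewrite imset_id.
rewrite (_ : [set _ | x in S] = induced_iso (apply_op o v G) s @: (step_iso o v G @: S)).
  rewrite [apply_ops _ _]/= IH; apply: nullity_invol_iso; first exact: step_isoK.
  exact: step_indep.
by rewrite -imset_comp.
Qed.

End RankInvariance.

Section NormalForm.
Variable V : finType.
Implicit Types (G H : lgraph V) (T R : {set elt V}) (Y : {set V}).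

Lemma indep_card_le G T Y :
  indep G T -> (forall w u, w \in T -> u \notin Y -> IAScol G w u = 0) ->
  (#|T| <= #|Y|)%N.
Proof.
move=> indepT suppY.
pose M : 'M['F_2]_(#|T|, #|Y|) := \matrix_(i, j) IAScol G (enum_val i) (enum_val j).
suff : row_free M by rewrite /row_free => /eqP <-; exact: rank_leq_col.
rewrite -kermx_eq0; apply/negPn/negP => /rowV0Pn [r /sub_kermxP rM0 r_nz].
pose c := [ffun w => \sum_i r 0 i * (enum_val i == w)%:R].
have c_enum i : c (enum_val i) = r 0 i.
  rewrite ffunE (bigD1 i) //= eqxx mulr1 big1 ?addr0 // => j ji.
  by rewrite (inj_eq enum_val_inj) (negbTE ji) mulr0.
have comb_c u : colcomb G c u = \sum_i r 0 i * IAScol G (enum_val i) u.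
  rewrite /colcomb (eq_bigr (fun w => \sum_i r 0 i * (enum_val i == w)%:R * IAScol G w u)).
    rewrite exchange_big /=; apply: eq_bigr => i _.
    rewrite (bigD1 (enum_val i)) //= eqxx mulr1 big1 ?addr0 // => w /negbTE.
    by rewrite eq_sym => ->; rewrite mulr0 mul0r.
  by move=> w _; rewrite ffunE mulr_suml.
have c_supp w : w \notin T -> c w = 0.
  move=> wT; rewrite ffunE big1 // => i _.
  by case: (eqVneq (enum_val i) w) (enum_valP i) => [->|]; rewrite ?(negbTE wT) ?mulr0.
have c_dep u : colcomb G c u = 0.
  rewrite comb_c; have [uY|uY] := boolP (u \in Y); last first.
    by rewrite big1 // => i _; rewrite suppY ?mulr0 // enum_valP.
  move/matrixP/(_ 0 (enum_rank_in uY u)): rM0; rewrite !mxE => /(etrans _); apply.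
  by apply: eq_bigr => i _; rewrite !mxE enum_rankK_in.
move/negP: r_nz; apply; apply/eqP/rowP => i.
by rewrite mxE -c_enum ((indepP _ _ indepT) c c_supp c_dep).
Qed.

Lemma indep_phi G T : (forall w, w \in T -> w.1 = Phi) -> indep G T.
Proof.
move=> phiT; apply/indepP => c c_supp c_dep.
have c_nphi w : w.1 != Phi -> c w = 0.
  by move=> nw; apply: c_supp; apply: contra nw => /phiT ->.
have c_phi u : c (Phi, u) = 0.
  move: (c_dep u); rewrite /colcomb (bigD1 (Phi, u)) //= eqxx mulr1 big1 ?addr0 //.
  move=> [k x] /= ne; have [Ek|nk] := eqVneq k Phi; last by rewrite c_nphi // mul0r.
  have xu : (u == x) = false by apply: contraNF ne => /eqP ->; rewrite Ek.
  by rewrite Ek /= xu mulr0.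
by move=> [k x]; have [->|nk] := eqVneq k Phi; [exact: c_phi | exact: c_nphi].
Qed.

Definition phi_part R := [set w in R | w.1 == Phi].
Definition non_phi R := [set w in R | w.1 != Phi].

Lemma card_phi_part_non_phi R : (#|phi_part R| + #|non_phi R|)%N = #|R|.
Proof.
rewrite -(cardID [pred w : elt V | w.1 == Phi] R).
by congr (_ + _)%N; apply: eq_card => w; rewrite !inE andbC.
Qed.

Definition zeta_kind G u : kind := if lloop G u then Psi else Chi.
Definition other_kind G u : kind := if lloop G u then Chi else Psi.

Lemma zetaE G x : zeta G x = (zeta_kind G x, x) |: [set (Phi, w) | w in nbhd G x].
Proof. by rewrite /zeta /zeta_kind; case: lloop. Qed.

Lemma zeta_kind_phiF G u : (zeta_kind G u == Phi) = false.
Proof. by rewrite /zeta_kind; case: lloop; rewrite kind_eqE. Qed.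

Lemma other_kind_phiF G u : (other_kind G u == Phi) = false.
Proof. by rewrite /other_kind; case: lloop; rewrite kind_eqE. Qed.

Lemma kindP G v k : [\/ k = Phi, k = zeta_kind G v | k = other_kind G v].
Proof.
rewrite /zeta_kind /other_kind; case: k; case: lloop;
  by [apply: Or31 | apply: Or32 | apply: Or33].
Qed.

Lemma IAScol_zeta_kind G u : IAScol G (zeta_kind G u, u) u = 0.
Proof.
by rewrite IAScolE /zeta_kind /colb /adjb; case: (lloop G u) => /=; rewrite eqxx ?addbT.
Qed.

Definition zeta_normal H R X : Prop :=
  [/\ stable H X, \bigcup_(x in X) zeta H x \subset R &
      R \subset [set (Phi, v) | v in ~: X] :|: \bigcup_(x in X) zeta H x].

Section NullityOfNormalForm.
Variables (H : lgraph V) (R : {set elt V}) (X : {set V}).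
Hypothesis zetaX_sub : \bigcup_(x in X) zeta H x \subset R.
Hypothesis R_sub : R \subset [set (Phi, v) | v in ~: X] :|: \bigcup_(x in X) zeta H x.

Lemma normal_nonphi w :
  w \in R -> w.1 != Phi -> exists2 x, x \in X & w = (zeta_kind H x, x).
Proof.
move=> /(subsetP R_sub); rewrite inE => /orP [/imsetP [v _ ->]|]; first by rewrite eqxx.
move=> /bigcupP [x xX]; rewrite zetaE !inE => /orP [/eqP -> _|/imsetP [u _ ->]].
  by exists x.
by rewrite eqxx.
Qed.

Lemma normal_zeta_kind x : x \in X -> (zeta_kind H x, x) \in R.
Proof.
by move=> xX; apply/(subsetP zetaX_sub)/bigcupP; exists x; rewrite ?zetaE ?setU11.
Qed.

Lemma normal_nbhd x u : x \in X -> ladj H x u -> (Phi, u) \in R.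
Proof.
move=> xX xu; apply/(subsetP zetaX_sub)/bigcupP; exists x => //.
by rewrite zetaE inE; apply/orP; right; apply/imsetP; exists u; rewrite ?inE.
Qed.

(* The phi-columns of [R] are a basis, and every other column of [R] lies in
   their span; so the rank is the number of phi-elements. *)
Lemma mrank_normal : mrank H R = #|phi_part R|.
Proof.
set Y := [set v | (Phi, v) \in R].
have cardY : #|Y| = #|phi_part R|.
  have phi_inj : injective (pair Phi : V -> elt V) by move=> a b [].
  rewrite -(card_imset Y phi_inj).
  apply: eq_card => -[k v]; rewrite !inE.
  apply/imsetP/andP => [[u uY [-> ->]] | [vR /eqP /= Ek]].
    by rewrite inE in uY; split.
  by rewrite Ek in vR *; exists v; rewrite ?inE.
rewrite -cardY; apply/eqP; rewrite eqn_leq; apply/andP; split.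
  apply/bigmax_leqP => T /andP [TR indepT]; apply: (indep_card_le indepT) => w u wT uY.
  have wR := subsetP TR _ wT; have [wphi|nw] := eqVneq w.1 Phi.
    move: w wphi wR {wT} => [k v] /= -> vR.
    by case: eqP uY => // ->; rewrite inE vR.
  have [x xX ->] := normal_nonphi wR nw; have [->|nux] := eqVneq u x.
    exact: IAScol_zeta_kind.
  have xu : ladj H x u = false.
    by apply: contraNF uY => xu; rewrite inE (normal_nbhd xX).
  rewrite IAScolE /colb /zeta_kind.
  by case: (lloop H x); rewrite /= adjb_neq // ?(negbTE nux) ladj_sym xu.
rewrite cardY.
apply: (@leq_bigmax_cond _ (fun T => (T \subset R) && indep H T) (fun T => #|T|)).
apply/andP; split; first by apply/subsetP => w; rewrite inE => /andP [].
by apply: indep_phi => w; rewrite inE => /andP [_ /eqP].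
Qed.

Lemma nullity_normal : nullity H R = #|X|.
Proof.
rewrite /nullity mrank_normal -card_phi_part_non_phi addKn.
have zk_inj : injective (fun x => (zeta_kind H x, x)) by move=> a b [].
rewrite -(card_imset X zk_inj); apply: eq_card => -[k v]; rewrite !inE /=.
apply/andP/imsetP => [[vR nk] | [x xX [-> ->]]].
  by have [x xX ->] := normal_nonphi vR nk; exists x.
by rewrite zeta_kind_phiF normal_zeta_kind.
Qed.
End NullityOfNormalForm.

End NormalForm.

Section Reduction.
Variable V : finType.
Implicit Types (G : lgraph V) (R : {set elt V}).

Lemma subtransversal_eq R w w' :
  subtransversal R -> w \in R -> w' \in R -> w.2 = w'.2 -> w = w'.
Proof.
by move=> stR wR w'R Ew; apply: (card_le1_eqP (stR w.2)); rewrite inE ?wR ?w'R Ew eqxx.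
Qed.

Lemma induced_iso_snd G s w : (induced_iso G s w).2 = w.2.
Proof. by elim: s G w => [|[o v] s IH] G w //=; rewrite IH step_iso_snd. Qed.

Lemma induced_iso_inj G s : injective (induced_iso G s).
Proof.
elim: s G => [|[o v] s IH] G //= w w' /IH.
exact: (inv_inj (step_isoK o v G)).
Qed.

Lemma subtransversal_induced_iso G s R :
  subtransversal R -> subtransversal (induced_iso G s @: R).
Proof.
move=> stR v; rewrite imset_sep card_imset; last exact: induced_iso_inj.
apply: leq_trans (stR v); apply: subset_leq_card.
by apply/subsetP => w; rewrite !inE induced_iso_snd.
Qed.

Lemma apply_ops_cat G s1 s2 : apply_ops G (s1 ++ s2) = apply_ops (apply_ops G s1) s2.
Proof. by rewrite /apply_ops foldl_cat. Qed.

Lemma induced_iso_cat G s1 s2 w :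
  induced_iso G (s1 ++ s2) w = induced_iso (apply_ops G s1) s2 (induced_iso G s1 w).
Proof. by elim: s1 G w => [|[o v] s1 IH] G w //=; rewrite IH. Qed.

Lemma ns_exch_other_kind G v : ns_exch G v (other_kind G v, v) = (Phi, v).
Proof.
by rewrite /ns_exch /swap_at /other_kind; case: lloop; rewrite /= eqxx !kind_eqE.
Qed.

Lemma non_phi_induced_iso_lt G s R w0 :
  w0 \in non_phi R -> (induced_iso G s w0).1 = Phi ->
  (forall w, w \in R -> w.1 = Phi -> (induced_iso G s w).1 = Phi) ->
  (#|non_phi (induced_iso G s @: R)| < #|non_phi R|)%N.
Proof.
move=> w0R w0_phi phi_stable; set f := induced_iso G s.
rewrite /non_phi imset_sep card_imset; last exact: induced_iso_inj.
apply: proper_card; apply/properP; split.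
  apply/subsetP => w; rewrite !inE => /andP [wR nw]; rewrite wR /=.
  by apply: contra nw => /eqP /(phi_stable _ wR) ->.
by exists w0; rewrite // inE w0_phi eqxx andbF.
Qed.

Definition reaches_normal G R : Prop :=
  exists s X, zeta_normal (apply_ops G s) (induced_iso G s @: R) X.

Lemma reaches_normal_cat G s R :
  reaches_normal (apply_ops G s) (induced_iso G s @: R) -> reaches_normal G R.
Proof.
move=> [s' [X normal]]; exists (s ++ s'), X; rewrite apply_ops_cat.
suff -> : induced_iso G (s ++ s') @: R =
          induced_iso (apply_ops G s) s' @: (induced_iso G s @: R) by [].
by rewrite -imset_comp; apply: eq_imset => w; rewrite induced_iso_cat.
Qed.

Lemma other_kind_decrease G R u :
  subtransversal R -> (other_kind G u, u) \in R ->
  (#|non_phi (induced_iso G [:: (Ons, u)] @: R)| < #|non_phi R|)%N.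
Proof.
move=> stR uR; apply: (@non_phi_induced_iso_lt _ _ _ (other_kind G u, u)) => /=.
- by rewrite inE uR other_kind_phiF.
- by rewrite ns_exch_other_kind.
move=> [k x] xR /= k_phi; rewrite {}k_phi in xR *.
have [xu|nxu] := eqVneq x u; last by rewrite ns_exch_fix.
by case: (subtransversal_eq stR xR uR xu) => /eqP; rewrite eq_sym other_kind_phiF.
Qed.

(* Local complementation at a neighbour [w] of [u] toggles the loop of [u],
   turning the zeta-element of [u] into its other element. *)
Lemma zeta_kind_nbr_decrease G R u w :
  subtransversal R -> (zeta_kind G u, u) \in R -> ladj G u w ->
  (Phi, w) \notin R ->
  (#|non_phi (induced_iso G [:: (Ons, w); (Ons, u)] @: R)| < #|non_phi R|)%N.
Proof.
move=> stR uR uw wR; have nuw : u != w by apply: contraTneq uw => ->; rewrite ladj_irr.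
apply: (@non_phi_induced_iso_lt _ _ _ (zeta_kind G u, u)) => /=.
- by rewrite inE uR zeta_kind_phiF.
- have -> : zeta_kind G u = other_kind (loc_ns w G) u.
    by rewrite /zeta_kind /other_kind /= (ladj_sym G w u) uw; case: lloop.
  by rewrite ns_exch_fix // ns_exch_other_kind.
move=> [k x] xR /= k_phi; rewrite {}k_phi in xR *.
have [xw|nxw] := eqVneq x w; first by rewrite -xw xR in wR.
rewrite ns_exch_fix //; have [xu|nxu] := eqVneq x u; last by rewrite ns_exch_fix.
by case: (subtransversal_eq stR xR uR xu) => /eqP; rewrite eq_sym zeta_kind_phiF.
Qed.

Lemma zeta_normal_saturated G R :
  subtransversal R -> (forall u, (other_kind G u, u) \notin R) ->
  (forall u w, (zeta_kind G u, u) \in R -> ladj G u w -> (Phi, w) \in R) ->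
  zeta_normal G R [set u | (zeta_kind G u, u) \in R].
Proof.
move=> stR no_other nbr_phi; split.
- move=> x y; rewrite !inE => xR yR; apply/negP => xy.
  by case: (subtransversal_eq stR (nbr_phi _ _ xR xy) yR erefl) => /eqP;
    rewrite eq_sym zeta_kind_phiF.
- apply/bigcupsP => x; rewrite inE => xR; rewrite zetaE subUset sub1set xR /=.
  by apply/subsetP => w /imsetP [y]; rewrite inE => xy ->; apply: nbr_phi xy.
apply/subsetP => -[k v] vR; rewrite inE; case: (kindP G v k) => k_eq; subst k.
- apply/orP; left; apply/imsetP; exists v => //; rewrite !inE; apply/negP => vX.
  by case: (subtransversal_eq stR vR vX erefl) => /eqP; rewrite eq_sym zeta_kind_phiF.
- by apply/orP; right; apply/bigcupP; exists v; rewrite ?zetaE ?setU11 ?inE.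
by move: (no_other v); rewrite vR.
Qed.

Lemma zeta_normal_or_decrease G R : subtransversal R ->
  (exists X, zeta_normal G R X) \/
  exists s, (#|non_phi (induced_iso G s @: R)| < #|non_phi R|)%N.
Proof.
move=> stR; have [/existsP [u uR] | /existsPn no_other] :=
  boolP [exists u, (other_kind G u, u) \in R].
  by right; exists [:: (Ons, u)]; apply: other_kind_decrease.
have [/existsP [u /existsP [w /and3P [uR uw wR]]] | /existsPn sat] := boolP
  [exists u, exists w, [&& (zeta_kind G u, u) \in R, ladj G u w & (Phi, w) \notin R]].
  by right; exists [:: (Ons, w); (Ons, u)]; apply: zeta_kind_nbr_decrease.
left; exists [set u | (zeta_kind G u, u) \in R]; apply: zeta_normal_saturated => //.
move=> u w uR uw; apply/negPn/negP => wR.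
by have /existsPn/(_ w) := sat u; rewrite uR uw wR.
Qed.

Lemma zeta_normal_reachable G R : subtransversal R -> reaches_normal G R.
Proof.
move: {2}#|non_phi R| (leqnn #|non_phi R|) => n.
elim: n G R => [|n IH] G R le_n stR.
all: have [[X normal] | [s lt_s]] := zeta_normal_or_decrease G stR;
  first by exists [::], X; rewrite /= imset_id.
  by move: (leq_trans lt_s le_n); rewrite ltn0.
apply: reaches_normal_cat (IH _ _ _ (subtransversal_induced_iso G s stR)).
by rewrite -ltnS (leq_trans lt_s).
Qed.

End Reduction.

Theorem corollary4p4 (V : finType) (G : lgraph V) (S : {set elt V}) (nu : nat) :
  subtransversal S ->
  (nu = nullity G S <->
   exists (H : lgraph V) (s : seq (locop * V)),
     apply_ops G s = H /\
     exists X : {set V},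
       [/\ stable H X, #|X| = nu,
        \bigcup_(x in X) zeta H x \subset induced_iso G s @: S &
        induced_iso G s @: S \subset
          [set (Phi, v) | v in ~: X] :|: \bigcup_(x in X) zeta H x]).
Proof.
move=> stS; split => [-> | [H [s [<- [X [_ <- zetaX_sub S_sub]]]]]].
  have [s [X [stableX zetaX_sub S_sub]]] := zeta_normal_reachable G stS.
  exists (apply_ops G s), s; split => //; exists X; split => //.
  by rewrite -(nullity_induced_iso G s S) (nullity_normal zetaX_sub S_sub).
by rewrite -(nullity_induced_iso G s S) (nullity_normal zetaX_sub S_sub).
Qed.
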